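(* Let $k$ be a positive integer, $S=\{3k,3k+1,6k-1\}$ and $G=\langle S\rangle$. For $i\in\mathbb{N}$ let $A_{i,k}=[(2i)3k-i,\,(2i)3k+2i]$ and $B_{i,k}=[(2i+1)3k-i,\,(2i+1)3k+2i+1]$, and let $H_{1,k}=\bigcup_{i\in\mathbb{N}}(A_{i,k}\cup B_{i,k})$. Then: (1) $H_{1,k}$ is a submonoid of $(\mathbb{N},+,0)$ containing $S$; (2) $A_{i,k}<B_{i,k}$ for every $i\in[0,k-1]$; (3) $B_{i,k}<A_{i+1,k}$ for every $i\in[0,k-1]$; (4) $[(2(k-1)+1)3k-(k-1),\infty[\ \subseteq H_{1,k}$; (5) $G=H_{1,k}$; (6) $H_{1,k}$ is a $3$-permutation numerical semigroup.
   Context: $\mathbb{N}=\{0,1,2,\dots\}$. A numerical semigroup is a submonoid $G$ of $(\mathbb{N},+,0)$ with $\mathbb{N}\setminus G$ finite; $\langle S\rangle$ is the submonoid generated by $S$. Writing the elements of a numerical semigroup $G$ as $0=g_0<g_1<g_2<\cdots$, $G$ is an $n$-permutation numerical semigroup if $G=\langle\{g_1,\dots,g_n\}\rangle$ and for every $k\in\mathbb{N}$ the tuple $(g_{kn+1}\bmod n,\dots,g_{kn+n}\bmod n)$ contains exactly one representative of each residue class mod $n$. Notation: $[a,b]=\{x\in\mathbb{N}:a\le x\le b\}$, $[a,\infty[=\{x\in\mathbb{N}:x\ge a\}$. For nonempty $A,B\subseteq\mathbb{N}$, $A<B$ means $x<y$ for all $x\in A$, $y\in B$. *)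

From mathcomp Require Import all_boot.
Set Implicit Arguments. Unset Strict Implicit. Unset Printing Implicit Defensive.

Definition in_itv (a b x : nat) : Prop := a <= x <= b.

Definition set_lt (A B : nat -> Prop) : Prop :=
  forall x y, A x -> B y -> x < y.

Definition submonoid (G : nat -> Prop) : Prop :=
  G 0 /\ forall x y, G x -> G y -> G (x + y).

Inductive gen (S : nat -> Prop) : nat -> Prop :=
  | gen0 : gen S 0
  | genS x : S x -> gen S x
  | genD x y : gen S x -> gen S y -> gen S (x + y).

Definition numerical_semigroup (G : nat -> Prop) : Prop :=
  submonoid G /\ exists N, forall x, N <= x -> G x.

(* enum_at G j x : x is g_j, the j-th element (0-based: g_0 < g_1 < ...)
   of G in increasing order, i.e. x \in G and exactly j elements of G lie below x. *)
Definition enum_at (G : nat -> Prop) (j x : nat) : Prop :=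
  G x /\ exists s : seq nat, [/\ size s = j, uniq s &
                                  forall y, y \in s <-> (G y /\ y < x)].

Definition perm_numerical_semigroup (n : nat) (G : nat -> Prop) : Prop :=
  numerical_semigroup G /\
  (forall x, G x <-> gen (fun y => exists t, 1 <= t <= n /\ enum_at G t y) x) /\
  (forall m r, r < n ->
     exists! t, 1 <= t <= n /\ exists x, enum_at G (m * n + t) x /\ x %% n = r).

Definition A_ik (i k : nat) : nat -> Prop :=
  in_itv ((2 * i) * (3 * k) - i) ((2 * i) * (3 * k) + 2 * i).
Definition B_ik (i k : nat) : nat -> Prop :=
  in_itv ((2 * i + 1) * (3 * k) - i) ((2 * i + 1) * (3 * k) + 2 * i + 1).
Definition H1 (k : nat) : nat -> Prop :=
  fun x => exists i, A_ik i k x \/ B_ik i k x.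

Definition S_k (k : nat) : nat -> Prop :=
  fun x => x = 3 * k \/ x = 3 * k + 1 \/ x = 6 * k - 1.

From mathcomp Require Import all_boot zify.
Set Implicit Arguments. Unset Strict Implicit. Unset Printing Implicit Defensive.

(* Sums of the intervals fall into intervals (A_i + A_j <= A_(i+j), A_i + B_j <= B_(i+j),
   B_i + B_j <= A_(i+j+1)), so H1 is a monoid, and it is generated by S because
   A_(i+1) = A_i + [6k-1, 6k+2] and B_i = A_i + [3k, 3k+1].  From B_(k-1) on the intervals
   overlap; before that they are disjoint, of sizes 3i+1 and 3i+2, so exactly 3i^2
   elements of H1 lie below A_i.  Hence g_(j+1) > g_j + 1 only when g_j ends A_i, where
   j = 3i^2 + 3i, or when g_j ends B_i and g_(j+1) starts A_(i+1), at distance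
   3(k-i) - 2 = 1 (mod 3).  So g_(3m+1), g_(3m+2), g_(3m+3) are x, x+1, x+2 mod 3. *)

Lemma eq_gen (S T : nat -> Prop) :
  (forall x, S x <-> T x) -> forall x, gen S x <-> gen T x.
Proof.
have sub_gen (U V : nat -> Prop) x : (forall y, U y -> V y) -> gen U x -> gen V x.
  by move=> UV; elim=> [|y /UV|y z _ ? _ ?]; [exact: gen0|exact: genS|exact: genD].
by move=> ST x; split; apply: sub_gen => y /ST.
Qed.

Lemma enum_at_fun (G : nat -> Prop) j x y : enum_at G j x -> enum_at G j y -> x = y.
Proof.
wlog lt_xy : x y / x < y.
  by move=> wlog ex ey; case: (ltngtP x y) => [/wlog|/wlog|] ->.
move=> [Gx [s [<- uniq_s below_x]]] [_ [t [size_t _ below_y]]].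
suff : size (x :: s) <= size t by rewrite size_t /=; lia.
apply: uniq_leq_size => [|z].
  by rewrite /= uniq_s andbT; apply/negP => /below_x[_]; rewrite ltnn.
by rewrite inE => /predU1P[->|/below_x[Gz lt_zx]]; apply/below_y; split => //; lia.
Qed.

Section Rank.
Variable P : pred nat.

Definition rank x := count P (iota 0 x).

Lemma rankD a n : rank (a + n) = rank a + count P (iota a n).
Proof. by rewrite /rank iotaD count_cat. Qed.

Lemma rankS x : rank x.+1 = rank x + P x.
Proof. by rewrite -addn1 rankD /= addn0. Qed.

Lemma enum_atP (G : nat -> Prop) : (forall x, G x <-> P x) ->
  forall j x, enum_at G j x <-> P x /\ rank x = j.
Proof.
move=> GP j x; have below y : y \in filter P (iota 0 x) <-> G y /\ y < x.
  rewrite mem_filter mem_iota /= add0n GP.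
  by split => [/andP[-> ->] //|[-> ->]].
split=> [[/GP Px [s [<- uniq_s below_x]]]|[/GP Gx <-]]; split => //.
  rewrite /rank -size_filter; apply/perm_size/uniq_perm => [||y].
  - exact/filter_uniq/iota_uniq.
  - exact: uniq_s.
  by apply/idP/idP => [/below/below_x|/below_x/below].
by exists (filter P (iota 0 x)); rewrite size_filter filter_uniq ?iota_uniq.
Qed.

Lemma rank_surj N : (forall x, N <= x -> P x) -> forall j, exists2 x, P x & rank x = j.
Proof.
move=> cofin j; have : exists x, j < rank x.+1.
  exists (N + j); rewrite -addnS rankD (@eq_in_count _ _ predT) ?count_predT ?size_iota.
    by rewrite addnS; lia.
  by move=> y; rewrite mem_iota => /andP[/cofin].
case/ex_minnP=> x; rewrite rankS => lt_j minx.
have le_rank : rank x <= j.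
  case: x lt_j minx => [|x] _ minx; first by [].
  by case: leqP => // /minx; rewrite ltnn.
by exists x; case: (P x) lt_j => /=; lia.
Qed.

End Rank.

Section PermutationResidues.
Variables (G : nat -> Prop) (n : nat).
Hypothesis enum_at_total : forall j, exists x, enum_at G j x.
Hypothesis enum_at_succ_mod : forall j x y,
  j %% n != 0 -> enum_at G j x -> enum_at G j.+1 y -> y = x.+1 %[mod n].

Lemma enum_at_block_mod m x0 t x : 1 <= t <= n ->
  enum_at G (m * n).+1 x0 -> enum_at G (m * n + t) x -> x = x0 + t.-1 %[mod n].
Proof.
move=> /andP[]; elim: t x => [|t IH] x // _ le_tn ex0 ex.
case: t IH le_tn ex => [|t] IH le_tn ex.
  by rewrite addn1 in ex; rewrite addn0 (enum_at_fun ex ex0).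
have [y ey] := enum_at_total (m * n + t.+1).
rewrite (enum_at_succ_mod _ ey) -?addnS //; last by rewrite modnMDl modn_small.
by rewrite -addn1 -modnDml (IH y) ?modnDml -?addnA ?addn1 //; lia.
Qed.

Lemma perm_residues m r : r < n ->
  exists! t, 1 <= t <= n /\ exists x, enum_at G (m * n + t) x /\ x %% n = r.
Proof.
move=> lt_rn; have [x0 ex0] := enum_at_total (m * n).+1.
have lt_x0 : x0 %% n < n by rewrite ltn_mod; lia.
exists ((r + n - x0 %% n) %% n).+1; split.
  split; first by rewrite ltn_mod; lia.
  have [x ex] := enum_at_total (m * n + ((r + n - x0 %% n) %% n).+1).
  exists x; split => //; rewrite (enum_at_block_mod _ ex0 ex) /=; last first.
    by rewrite ltn_mod; lia.
  by rewrite modnDmr -modnDml subnKC ?modnDr ?(modn_small lt_rn) //; lia.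
move=> t [le_tn [x [ex <-]]]; rewrite (enum_at_block_mod le_tn ex0 ex).
have : (x0 %% n + ((x0 + t.-1) %% n + n - x0 %% n)) %% n = (x0 %% n + t.-1) %% n.
  by rewrite subnKC ?modnDr ?modn_mod ?modnDml // ltnW // ltn_addl.
by move/eqP; rewrite eqn_modDl (@modn_small t.-1) => [/eqP ->|]; lia.
Qed.

End PermutationResidues.

Lemma H1_submonoid k : submonoid (H1 k).
Proof.
split; first by exists 0; left; rewrite /A_ik /in_itv.
move=> x y [i Hx] [j Hy]; rewrite /A_ik /B_ik /in_itv in Hx Hy.
case: Hx Hy => /andP[? ?] [] /andP[? ?].
- by exists (i + j); left; rewrite /A_ik /in_itv; apply/andP; split; nia.
- by exists (i + j); right; rewrite /B_ik /in_itv; apply/andP; split; nia.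
- by exists (i + j); right; rewrite /B_ik /in_itv; apply/andP; split; nia.
- by exists (i + j).+1; left; rewrite /A_ik /in_itv; apply/andP; split; nia.
Qed.

Lemma S_k_sub_H1 k x : S_k k x -> H1 k x.
Proof.
by case=> [|[|]] ->; [exists 0; right|exists 0; right|exists 1; left];
  rewrite /A_ik /B_ik /in_itv; apply/andP; split; lia.
Qed.

Lemma gen_itvD (S : nat -> Prop) a b c d : a <= b -> c <= d ->
  (forall x, in_itv a b x -> gen S x) -> (forall x, in_itv c d x -> gen S x) ->
  forall x, in_itv (a + c) (b + d) x -> gen S x.
Proof.
move=> le_ab le_cd genab gencd x /andP[? ?].
have -> : x = (x - maxn c (x - b)) + maxn c (x - b) by lia.
by apply: genD; [apply: genab | apply: gencd]; apply/andP; split; lia.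
Qed.

Section H1Structure.
Variable k : nat.
Hypothesis k_gt0 : 0 < k.

Lemma A_lt_B i : i < k -> set_lt (A_ik i k) (B_ik i k).
Proof. by move=> lt_ik x y /andP[? ?] /andP[? ?]; nia. Qed.

Lemma B_lt_A i : i < k -> set_lt (B_ik i k) (A_ik i.+1 k).
Proof. by move=> lt_ik x y /andP[? ?] /andP[? ?]; nia. Qed.

Lemma H1_gap x : H1 k x -> ~ H1 k x.+1 -> exists2 i, i < k &
  x = 2 * i * (3 * k) + 2 * i \/ i.+1 < k /\ x = (2 * i + 1) * (3 * k) + 2 * i + 1.
Proof.
move=> [i [|] /andP[? ?]] Hx1.
  have right_end : x = 2 * i * (3 * k) + 2 * i.
    by apply/eqP; rewrite eqn_leq; apply/andP; split => //; apply/negP => ?;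
      apply: Hx1; exists i; left; apply/andP; split; lia.
  have lt_ik : i < k.
    by case: ltnP => // ?; case: Hx1; exists i; right; apply/andP; split; nia.
  by exists i => //; left.
have right_end : x = (2 * i + 1) * (3 * k) + 2 * i + 1.
  by apply/eqP; rewrite eqn_leq; apply/andP; split => //; apply/negP => ?;
    apply: Hx1; exists i; right; apply/andP; split; lia.
have lt_i1k : i.+1 < k.
  by case: ltnP => // ?; case: Hx1; exists i.+1; left; apply/andP; split; nia.
by exists i => //; [lia | right].
Qed.

Definition inH1 : pred nat := fun x =>
  has (fun i => (2 * i * (3 * k) - i <= x <= 2 * i * (3 * k) + 2 * i) ||
                ((2 * i + 1) * (3 * k) - i <= x <= (2 * i + 1) * (3 * k) + 2 * i + 1))
      (iota 0 x.+1).

Lemma inH1P x : reflect (H1 k x) (inH1 x).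
Proof.
apply: (iffP hasP) => [[i _ /orP]|[i Hx]]; first by exists i.
exists i; last by apply/orP.
by rewrite mem_iota; case: Hx => /andP[? ?]; nia.
Qed.

Lemma H1_conductor x : (2 * (k - 1) + 1) * (3 * k) - (k - 1) <= x -> H1 k x.
Proof.
move/subnK <-; elim: (x - _) => [|d IH].
  by exists (k - 1); right; apply/andP; split; nia.
rewrite addSn; apply/inH1P/contraT => /inH1P /(H1_gap IH)[i lt_ik]; nia.
Qed.

Lemma gen_S_k_3k x : in_itv (3 * k) (3 * k + 1) x -> gen (S_k k) x.
Proof. by move=> /andP[? ?]; apply: genS; rewrite /S_k; lia. Qed.

Lemma gen_A i : forall x, A_ik i k x -> gen (S_k k) x.
Proof.
have gen_6k : forall x, in_itv (6 * k - 1) (6 * k + 2) x -> gen (S_k k) x.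
  move=> x /andP[? ?]; case: (ltnP x (6 * k)) => [?|?].
    by apply: genS; rewrite /S_k; lia.
  apply: (gen_itvD (leq_addr 1 _) (leq_addr 1 _) gen_S_k_3k gen_S_k_3k).
  by apply/andP; split; lia.
elim: i => [|i IH] x /andP[? ?]; first by rewrite (_ : x = 0); [exact: gen0 | lia].
by apply: (gen_itvD _ _ IH gen_6k); [lia | lia | apply/andP; split; nia].
Qed.

Lemma gen_S_k x : gen (S_k k) x <-> H1 k x.
Proof.
split; first by elim=> [|y /S_k_sub_H1 //|y z _ ? _ ?];
  [exact: (H1_submonoid k).1 | exact: (H1_submonoid k).2].
move=> [i [Ax|/andP[? ?]]]; first exact: gen_A Ax.
by apply: (gen_itvD _ _ (@gen_A i) gen_S_k_3k); [lia | lia | apply/andP; split; nia].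
Qed.

Lemma inH1_window i d : i < k -> d < 6 * k - 1 ->
  inH1 (2 * i * (3 * k) - i + d) = (d <= 3 * i) || (3 * k <= d <= 3 * k + 3 * i + 1).
Proof.
move=> lt_ik lt_d; have only_i j :
    A_ik j k (2 * i * (3 * k) - i + d) \/ B_ik j k (2 * i * (3 * k) - i + d) -> j = i.
  case=> /andP[]; move: lt_ik lt_d; case: (ltngtP j i) => // /subnK <- *; nia.
apply/inH1P/idP => [[j Hj]|/orP[?|/andP[? ?]]].
- move: (Hj); rewrite (only_i j Hj) => -[] /andP[? ?].
    by apply/orP; left; nia.
  by apply/orP; right; nia.
- by exists i; left; apply/andP; split; nia.
- by exists i; right; apply/andP; split; nia.
Qed.

Lemma count_inH1_window i d : i < k -> d <= 6 * k - 1 ->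
  count inH1 (iota (2 * i * (3 * k) - i) d) =
    minn d (3 * i).+1 + minn (d - 3 * k) (3 * i + 2).
Proof.
move=> lt_ik; elim: d => [|d IH] le_d; first by rewrite /=; lia.
rewrite -[X in iota _ X]addn1 iotaD count_cat IH 1?ltnW //= inH1_window //.
by case: (leqP d (3 * i)); case: (leqP (3 * k) d);
  case: (leqP d (3 * k + 3 * i + 1)) => /=; lia.
Qed.

Lemma rank_inH1_A i : i <= k -> rank inH1 (2 * i * (3 * k) - i) = 3 * (i * i).
Proof.
elim: i => [|i IH] le_ik //.
have -> : 2 * i.+1 * (3 * k) - i.+1 = 2 * i * (3 * k) - i + (6 * k - 1) by nia.
by rewrite rankD IH 1?ltnW // count_inH1_window //; lia.
Qed.

Lemma rank_inH1 i d : i < k -> d <= 6 * k - 1 ->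
  rank inH1 (2 * i * (3 * k) - i + d) =
    3 * (i * i) + minn d (3 * i).+1 + minn (d - 3 * k) (3 * i + 2).
Proof.
by move=> lt_ik le_d; rewrite rankD rank_inH1_A 1?ltnW // count_inH1_window // addnA.
Qed.

Lemma enum_at_H1 j x : enum_at (H1 k) j x <-> inH1 x /\ rank inH1 x = j.
Proof. by apply: enum_atP => y; split => /inH1P. Qed.

Lemma H1_enum_total j : exists x, enum_at (H1 k) j x.
Proof.
have [x ? ?] : exists2 x, inH1 x & rank inH1 x = j.
  by apply: rank_surj => x /H1_conductor/inH1P.
by exists x; apply/enum_at_H1.
Qed.

Lemma H1_enum_succ_mod3 j x y : j %% 3 != 0 ->
  enum_at (H1 k) j x -> enum_at (H1 k) j.+1 y -> y = x.+1 %[mod 3].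
Proof.
move=> j_mod ex ey; have [inx rank_x] := (enum_at_H1 j x).1 ex.
case: (boolP (inH1 x.+1)) => [inx1 | /inH1P notx1].
  have ex1 : enum_at (H1 k) j.+1 x.+1.
    by apply/enum_at_H1; rewrite rankS inx rank_x addn1.
  by rewrite (enum_at_fun ey ex1).
have [i lt_ik [x_endA | [lt_i1k x_endB]]] := H1_gap (elimT (inH1P x) inx) notx1.
  move: j_mod; rewrite -rank_x x_endA.
  have -> : 2 * i * (3 * k) + 2 * i = 2 * i * (3 * k) - i + 3 * i by nia.
  rewrite rank_inH1 //; last by nia.
  by rewrite (_ : _ + _ = 3 * (i * i + i)) ?modnMr //; lia.
have ez : enum_at (H1 k) j.+1 (2 * i.+1 * (3 * k) - i.+1).
  apply/enum_at_H1; split.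
    by apply/inH1P; exists i.+1; left; apply/andP; split; nia.
  rewrite rank_inH1_A 1?ltnW // -rank_x x_endB.
  have -> : (2 * i + 1) * (3 * k) + 2 * i + 1 =
    2 * i * (3 * k) - i + (3 * k + 3 * i + 1) by nia.
  by rewrite rank_inH1 //; nia.
rewrite (enum_at_fun ey ez) (_ : 2 * i.+1 * (3 * k) - i.+1 = (k - i.+1) * 3 + x.+1).
  by rewrite modnMDl.
by rewrite x_endB; nia.
Qed.

Lemma S_k_enum y : S_k k y <-> exists t, 1 <= t <= 3 /\ enum_at (H1 k) t y.
Proof.
have in_S x : S_k k x -> inH1 x by move/S_k_sub_H1/inH1P.
have e1 : enum_at (H1 k) 1 (3 * k).
  apply/enum_at_H1; split; first by apply: in_S; left.
  by rewrite -[3 * k]add0n (@rank_inH1 0 (3 * k)) //=; lia.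
have e2 : enum_at (H1 k) 2 (3 * k + 1).
  apply/enum_at_H1; split; first by apply: in_S; right; left.
  by rewrite -[3 * k + 1]add0n (@rank_inH1 0 (3 * k + 1)) //=; lia.
have e3 : enum_at (H1 k) 3 (6 * k - 1).
  apply/enum_at_H1; split; first by apply: in_S; right; right.
  by rewrite (_ : 6 * k - 1 = 2 * 1 * (3 * k) - 1) ?rank_inH1_A //; lia.
split=> [[|[|]] ->|[t [/andP[? ?] et]]]; [exists 1 | exists 2 | exists 3 | ] => //.
have : t \in [:: 1; 2; 3] by rewrite !inE; lia.
rewrite !inE => /or3P[] /eqP tE; rewrite tE in et.
- by left; apply: enum_at_fun et e1.
- by right; left; apply: enum_at_fun et e2.
- by right; right; apply: enum_at_fun et e3.
Qed.

End H1Structure.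

Theorem lemma4p1 (k : nat) (hk : 0 < k) :
  (submonoid (H1 k) /\ (forall x, S_k k x -> H1 k x)) /\
  (forall i, i <= k - 1 -> set_lt (A_ik i k) (B_ik i k)) /\
  (forall i, i <= k - 1 -> set_lt (B_ik i k) (A_ik i.+1 k)) /\
  (forall x, (2 * (k - 1) + 1) * (3 * k) - (k - 1) <= x -> H1 k x) /\
  (forall x, gen (S_k k) x <-> H1 k x) /\
  perm_numerical_semigroup 3 (H1 k).
Proof.
split; first by split; [exact: H1_submonoid | exact: S_k_sub_H1].
split; first by move=> i le_i; apply: A_lt_B; lia.
split; first by move=> i le_i; apply: B_lt_A; lia.
split; first exact: H1_conductor.
split; first exact: gen_S_k.
split; first by split; [exact: H1_submonoid | eexists; exact: H1_conductor].
split; first by move=> x; rewrite -gen_S_k //; apply: eq_gen => y; rewrite S_k_enum.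
by move=> m r; apply: perm_residues; [exact: H1_enum_total | exact: H1_enum_succ_mod3].
Qed.
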